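(* Let $A\in\{0,1\}$, $\varepsilon>0$, $c>\varepsilon$, and let $(R,W)$ be a solution of system (ODE) on $[\varepsilon,c)$ (with $R\in C^1$, $W\in C^2$) satisfying $$W(\varepsilon)<-1,\quad W'(\varepsilon)<0,\quad W''(\varepsilon)<0,\quad R(\varepsilon)>0.$$ Suppose $W(y)<-\frac13$ for all $y\in(\varepsilon,c)$ and $-2W(y)-R(y)>0$ for all $y\in(\varepsilon,c)$. Then $H(y):=W'(y)y+3W(y)+1<0$ for all $y\in(\varepsilon,c)$.
   Context: System (ODE) for $R(y),W(y)$, with $A\in\{0,1\}$: $R'(y)W(y)y=-R(y)\big(W'(y)y+3W(y)+1\big)$, $W''(y)W(y)y^2=\tfrac12(W(y)y)^2\big(W'(y)y+W(y)+1-R(y)\big)+(W'(y)y+1)^2+4W(y)+3W(y)^2-\tfrac A2\big(W'(y)y+3W(y)+1\big)$. *)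

From Stdlib Require Import Reals.
From Coquelicot Require Import Coquelicot.
Open Scope R_scope.

(* One-sided-aware derivative on an interval: f has derivative l at y
   relative to the domain D (here D = [eps, c)), i.e. the limit of
   difference quotients is taken only along points of D. At interior
   points this coincides with the usual derivative; at the left
   endpoint eps it is the right derivative. *)
Definition is_derive_on (D : R -> Prop) (f : R -> R) (y l : R) : Prop :=
  filterdiff f (within D (locally y)) (fun h => scal h l).

Definition continuous_on_at (D : R -> Prop) (f : R -> R) (y : R) : Prop :=
  filterlim f (within D (locally y)) (locally (f y)).

(* H = W'(y) y + 3 W(y) + 1 starts negative at eps.  If it ever became nonnegative, at its first
   zero s we would have H'(s) >= 0.  But substituting W'(s) s = -3 W(s) - 1 into the second
   equation of the system gives H'(s) s W(s) = (W(s) s)^2 (-2 W(s) - R(s)) / 2 > 0, and since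
   s > 0 and W(s) < 0 this forces H'(s) < 0. *)
From Stdlib Require Import Reals Lra Psatz Classical.
From Coquelicot Require Import Coquelicot.
Open Scope R_scope.

Definition H_of (W W1 : R -> R) (y : R) : R := W1 y * y + 3 * W y + 1.

Section DerivativeWithin.
Variable D : R -> Prop.

Lemma is_filter_lim_within (y : R) : is_filter_lim (within D (locally y)) y.
Proof. intros P HP; unfold within; revert HP; apply filter_imp; auto. Qed.

Lemma is_derive_on_continuous f y l : is_derive_on D f y l ->
  continuous_on_at D f y.
Proof.
  intro Hf.
  apply (@filterdiff_continuous_aux R_AbsRing R_NormedModule R_NormedModule
           (within D (locally y)) (within_filter _ _ _ (@filter_filter _ _ (locally_filter y))) f).
  - exists (fun h => scal h l); exact Hf.
  - apply is_filter_lim_within.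
Qed.

Lemma is_derive_on_interior f y l :
  locally y D -> is_derive_on D f y l -> is_derive f y l.
Proof.
  intros HD [Hl Hd]; split; [exact Hl|].
  intros x Hx e.
  assert (Hx' : is_filter_lim (within D (locally y)) x).
  { intros P HP; apply Hx in HP; unfold within; revert HP; apply filter_imp; auto. }
  generalize (filter_and _ _ HD (Hd x Hx' e)); apply filter_imp.
  intros z [Dz Hz]; auto.
Qed.

Lemma continuous_on_at_H_of (W W1 : R -> R) y :
  continuous_on_at D W y -> continuous_on_at D W1 y ->
  continuous_on_at D (H_of W W1) y.
Proof.
  intros HW HW1; unfold continuous_on_at, H_of.
  assert (Hid : filterlim (fun x => x) (within D (locally y)) (locally y))
    by (intros P HP; apply is_filter_lim_within; exact HP).
  apply (filterlim_comp_2 (fun x => W1 x * x + 3 * W x) (fun _ => 1) Rplus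
           (G := locally (W1 y * y + 3 * W y)) (H := locally 1));
    [| apply filterlim_const | apply (@filterlim_plus R_AbsRing R_NormedModule)].
  apply (filterlim_comp_2 (fun x => W1 x * x) (fun x => 3 * W x) Rplus
           (G := locally (W1 y * y)) (H := locally (3 * W y)));
    [| | apply (@filterlim_plus R_AbsRing R_NormedModule)].
  - apply (filterlim_comp_2 W1 (fun x => x) Rmult (G := locally (W1 y)) (H := locally y));
      auto; apply (@filterlim_mult R_AbsRing).
  - apply (filterlim_comp_2 (fun _ => 3) W Rmult (G := locally 3) (H := locally (W y)));
      auto; [apply filterlim_const | apply (@filterlim_mult R_AbsRing)].
Qed.

Lemma continuous_on_at_Rabs g y : continuous_on_at D g y ->
  forall e, 0 < e -> exists d, 0 < d /\
    forall x, D x -> Rabs (x - y) < d -> Rabs (g x - g y) < e.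
Proof.
  intros Hg e He.
  destruct (Hg _ (locally_ball (g y) (mkposreal e He))) as [d Hd].
  exists d; split; [apply cond_pos|].
  intros x Dx Hx; exact (Hd x Hx Dx).
Qed.

End DerivativeWithin.

Lemma locally_interval (a b s : R) : a < s < b -> locally s (fun x => a <= x < b).
Proof.
  intros Hs.
  assert (Hr : 0 < Rmin (s - a) (b - s)) by (apply Rmin_case; lra).
  exists (mkposreal _ Hr); intros z Hz; apply Rabs_def2 in Hz; simpl in Hz.
  pose proof (Rmin_l (s - a) (b - s)); pose proof (Rmin_r (s - a) (b - s)).
  unfold minus, plus, opp in *; simpl in *; lra.
Qed.

Lemma is_derive_H_of (W W1 : R -> R) s a b :
  is_derive W s a -> is_derive W1 s b ->
  is_derive (H_of W W1) s (b * s + W1 s + 3 * a).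
Proof.
  intros Ha Hb; unfold H_of.
  replace (b * s + W1 s + 3 * a) with
    (plus (plus (plus (mult b s) (mult (W1 s) one)) (scal 3 a)) zero)
    by (unfold plus, mult, scal, zero, one; simpl; unfold mult; simpl; ring).
  apply (@is_derive_plus R_AbsRing R_NormedModule);
    [| exact (@is_derive_const R_AbsRing R_NormedModule 1 s)].
  apply (@is_derive_plus R_AbsRing R_NormedModule).
  - apply (is_derive_mult W1 (fun x => x)); [exact Hb | exact (@is_derive_id R_AbsRing s) |].
    intros; apply Rmult_comm.
  - apply (is_derive_scal W); exact Ha.
Qed.

Lemma first_zero_of_continuous (g : R -> R) (a b : R) : a <= b ->
  (forall x, a <= x <= b -> forall e, 0 < e -> exists d, 0 < d /\
     forall t, a <= t <= b -> Rabs (t - x) < d -> Rabs (g t - g x) < e) ->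
  g a < 0 -> 0 <= g b ->
  exists s, a < s <= b /\ g s = 0 /\ forall t, a <= t < s -> g t < 0.
Proof.
  intros Hab Hg Ha Hb.
  set (E := fun x => a <= x <= b /\ forall t, a <= t <= x -> g t < 0).
  assert (Ea : E a) by (split; [lra | intros t Ht; replace t with a by lra; exact Ha]).
  assert (Eb : bound E) by (exists b; intros x [Hx _]; lra).
  destruct (completeness E Eb (ex_intro _ a Ea)) as [s [Hub Hlub]].
  assert (Has : a <= s) by (apply Hub; exact Ea).
  assert (Hsb : s <= b) by (apply Hlub; intros x [Hx _]; lra).
  assert (Hbefore : forall t, a <= t < s -> g t < 0).
  { intros t Ht.
    destruct (classic (exists x, E x /\ t < x)) as [[x [[_ Ex] Htx]] | Hn].
    - apply Ex; lra.
    - enough (s <= t) by lra.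
      apply Hlub; intros x Ex; destruct (Rle_dec x t) as [|Hxt]; [easy|].
      exfalso; apply Hn; exists x; split; [easy | lra]. }
  destruct (Rtotal_order (g s) 0) as [Hneg | [Hzero | Hpos]].
  - exfalso.
    assert (Hsb' : s < b) by (destruct (Req_dec s b); [subst; lra | lra]).
    destruct (Hg s ltac:(lra) (- g s / 2) ltac:(lra)) as [d [Hd Hgd]].
    set (x := Rmin (s + d / 2) b).
    assert (Hx1 : x <= s + d / 2) by apply Rmin_l.
    assert (Hx2 : x <= b) by apply Rmin_r.
    assert (Hx3 : s < x) by (unfold x; apply Rmin_case; lra).
    enough (E x) by (enough (x <= s) by lra; apply Hub; easy).
    split; [lra|]; intros t Ht.
    destruct (Rlt_dec t s); [apply Hbefore; lra|].
    pose proof (Hgd t ltac:(lra) ltac:(apply Rabs_def1; lra)) as Hts.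
    apply Rabs_def2 in Hts; lra.
  - exists s; repeat split; try easy.
    destruct (Req_dec s a); [subst; lra | lra].
  - exfalso.
    assert (Has' : a < s) by (destruct (Req_dec s a); [subst; lra | lra]).
    destruct (Hg s ltac:(lra) (g s / 2) ltac:(lra)) as [d [Hd Hgd]].
    set (t := Rmax (s - d / 2) a).
    assert (Ht1 : a <= t) by apply Rmax_r.
    assert (Ht2 : t < s) by (unfold t; apply Rmax_case; lra).
    assert (Ht3 : s - d / 2 <= t) by apply Rmax_l.
    pose proof (Hgd t ltac:(lra) ltac:(apply Rabs_def1; lra)) as Hts.
    apply Rabs_def2 in Hts; pose proof (Hbefore t ltac:(lra)); lra.
Qed.

Lemma is_derive_ge0_at_first_zero (g : R -> R) (a s l : R) :
  a < s -> is_derive g s l -> g s = 0 -> (forall t, a <= t < s -> g t < 0) -> 0 <= l.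
Proof.
  intros Has Hd Hs Hbefore.
  destruct (Rle_lt_dec 0 l) as [|Hl]; [easy | exfalso].
  apply is_derive_Reals in Hd.
  destruct (Hd (- l / 2) ltac:(lra)) as [d Hdd].
  set (k := Rmin (d / 2) ((s - a) / 2)).
  assert (Hk1 : k <= d / 2) by apply Rmin_l.
  assert (Hk2 : k <= (s - a) / 2) by apply Rmin_r.
  assert (Hk3 : 0 < k) by (unfold k; apply Rmin_case; generalize (cond_pos d); lra).
  pose proof (Hdd (- k) ltac:(lra) ltac:(apply Rabs_def1; lra)) as Hq.
  apply Rabs_def2 in Hq; destruct Hq as [Hq _].
  rewrite Hs in Hq.
  assert (Hneg : g (s + - k) < 0) by (apply Hbefore; lra).
  set (q := (g (s + - k) - 0) / - k) in Hq.
  assert (Hgq : g (s + - k) = - (q * k)) by (unfold q; field; lra).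
  nra.
Qed.

Lemma H_slope_neg_at_zero (A Rs W0 W1 W2 s : R) :
  0 < s -> W0 < 0 -> -2 * W0 - Rs > 0 ->
  W1 * s + 3 * W0 + 1 = 0 ->
  W2 * W0 * s ^ 2 =
    / 2 * (W0 * s) ^ 2 * (W1 * s + W0 + 1 - Rs)
    + (W1 * s + 1) ^ 2 + 4 * W0 + 3 * W0 ^ 2
    - A / 2 * (W1 * s + 3 * W0 + 1) ->
  W2 * s + W1 + 3 * W1 < 0.
Proof.
  intros Hs HW0 HR HH Hode.
  assert (HW1s : W1 * s = - 3 * W0 - 1) by lra.
  assert (Hkey : (W2 * s + W1 + 3 * W1) * s * W0 = / 2 * (W0 * s) ^ 2 * (-2 * W0 - Rs)).
  { replace ((W2 * s + W1 + 3 * W1) * s * W0) with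
      (W2 * W0 * s ^ 2 + 4 * W0 * (W1 * s)) by ring.
    rewrite Hode, HH, HW1s; ring. }
  assert (Hpos : 0 < / 2 * (W0 * s) ^ 2 * (-2 * W0 - Rs)).
  { assert (0 < (W0 * s) ^ 2) by (assert (W0 * s < 0) by nra; nra).
    apply Rmult_lt_0_compat; [apply Rmult_lt_0_compat|]; lra. }
  rewrite <- Hkey in Hpos.
  destruct (Rle_lt_dec 0 (W2 * s + W1 + 3 * W1)) as [Hl|]; [|easy].
  assert (0 <= (W2 * s + W1 + 3 * W1) * s) by nra.
  nra.
Qed.

Theorem mainTheorem8 (A : R) (eps c : R) (Rf R1 W W1 W2 : R -> R) :
  (A = 0 \/ A = 1) ->
  0 < eps -> eps < c ->
  (forall y, eps <= y < c ->
     is_derive_on (fun x => eps <= x < c) Rf y (R1 y) /\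
     is_derive_on (fun x => eps <= x < c) W y (W1 y) /\
     is_derive_on (fun x => eps <= x < c) W1 y (W2 y) /\
     continuous_on_at (fun x => eps <= x < c) R1 y /\ continuous_on_at (fun x => eps <= x < c) W2 y) ->
  (forall y, eps <= y < c ->
     R1 y * W y * y = - Rf y * (W1 y * y + 3 * W y + 1) /\
     W2 y * W y * y ^ 2 =
       / 2 * (W y * y) ^ 2 * (W1 y * y + W y + 1 - Rf y)
       + (W1 y * y + 1) ^ 2 + 4 * W y + 3 * W y ^ 2
       - A / 2 * (W1 y * y + 3 * W y + 1)) ->
  W eps < -1 -> W1 eps < 0 -> W2 eps < 0 -> Rf eps > 0 ->
  (forall y, eps < y < c -> W y < - / 3) ->
  (forall y, eps < y < c -> -2 * W y - Rf y > 0) ->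
  forall y, eps < y < c -> W1 y * y + 3 * W y + 1 < 0.
Proof.
  intros _ Heps Hc Hder Hode HWeps HW1eps _ _ HW HR y Hy.
  set (D := fun x => eps <= x < c).
  set (H := H_of W W1).
  change (H y < 0).
  destruct (Rlt_le_dec (H y) 0) as [|Hy0]; [easy | exfalso].
  assert (Hcont : forall x, eps <= x <= y -> forall e, 0 < e -> exists d, 0 < d /\
      forall t, eps <= t <= y -> Rabs (t - x) < d -> Rabs (H t - H x) < e).
  { intros x Hx e He.
    destruct (Hder x ltac:(lra)) as [_ [HdW [HdW1 _]]].
    destruct (continuous_on_at_Rabs D H x
      (continuous_on_at_H_of D W W1 x (is_derive_on_continuous D _ _ _ HdW)
         (is_derive_on_continuous D _ _ _ HdW1)) e He) as [d [Hd Hdd]].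
    exists d; split; [easy|]; intros t Ht; apply Hdd; unfold D; lra. }
  destruct (first_zero_of_continuous H eps y ltac:(lra) Hcont ltac:(unfold H, H_of; nra) Hy0)
    as [s [Hs [Hs0 Hbefore]]].
  assert (HsD : locally s D) by (apply locally_interval; lra).
  destruct (Hder s ltac:(lra)) as [_ [HdW [HdW1 _]]].
  pose proof (is_derive_H_of W W1 s _ _ (is_derive_on_interior D _ _ _ HsD HdW)
                (is_derive_on_interior D _ _ _ HsD HdW1)) as HdH.
  assert (Hslope : W2 s * s + W1 s + 3 * W1 s < 0).
  { pose proof (HW s ltac:(lra)).
    apply (H_slope_neg_at_zero A (Rf s) (W s)); [lra | lra | apply HR; lra | exact Hs0 |].
    apply Hode; lra. }
  pose proof (is_derive_ge0_at_first_zero H eps s _ ltac:(lra) HdH Hs0 Hbefore).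
  lra.
Qed.
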